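(* Let $(A,\Delta,\Delta')$ be a commutative Hopf brace over a field $k$, with antipodes $S$ (for $\Delta$) and $T$ (for $\Delta'$), and let $A_{\Delta'}$ denote the Hopf algebra $(A,m,1,\Delta',\epsilon,T)$. Then $(A_{\Delta'},A_{\Delta'})$ is a Hopf matched pair with coactions $$\rho(a)=a_{(-1)}\otimes a_{(0)}=S(a_1)a_{21'}\otimes a_{22'},$$ $$\varphi(a)=a_{[0]}\otimes a_{[1]}=T(a_{1'})_{(-1)}a_{2'}\otimes T(a_{1'})_{(0)}a_{3'}=S(T(a_{1'})_1)T(a_{1'})_{21'}a_{2'}\otimes T(a_{1'})_{22'}a_{3'},$$ for all $a\in A$.
   Context: All objects are over a field $k$. A Hopf brace $(A,\Delta,\Delta')$ consists of an algebra $(A,m,1)$ with two Hopf algebra structures $(A,m,1,\Delta,\varepsilon,S)$ and $(A,m,1,\Delta',\epsilon,T)$ such that for all $h$: $h_{1'}\otimes h_{2'1}\otimes h_{2'2}=h_{11'}S(h_2)h_{31'}\otimes h_{12'}\otimes h_{32'}$; it is commutative if $A$ is commutative. Sweedler notation: $\Delta(h)=h_1\otimes h_2$, $\Delta'(h)=h_{1'}\otimes h_{2'}$ (iterated $h_{1'}\otimes h_{2'}\otimes h_{3'}$), $h_{21'}$ means $\Delta'$ applied to $h_2$. Hopf matched pair: for Hopf algebras $A$ and $H$, a pair $(A,H)$ with linear maps $\rho:A\to H\otimes A$, $\rho(a)=a_{(-1)}\otimes a_{(0)}$, and $\varphi:H\to H\otimes A$, $\varphi(h)=h_{[0]}\otimes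 h_{[1]}$, such that $(A,\rho)$ is a left $H$-comodule algebra, $(H,\varphi)$ is a right $A$-comodule algebra (coactions are algebra maps), and for all $a\in A,h\in H$ (with comultiplications of $A$ and $H$ both written $x_1\otimes x_2$): (HM1) $a_{(-1)}\varepsilon_A(a_{(0)})=\varepsilon_A(a)1_H$, $\varepsilon_H(h_{[0]})h_{[1]}=\varepsilon_H(h)1_A$; (HM2) $a_{(-1)}\otimes a_{(0)1}\otimes a_{(0)2}=a_{1(-1)}a_{2(-1)[0]}\otimes a_{1(0)}a_{2(-1)[1]}\otimes a_{2(0)}$; (HM3) $h_{[0]1}\otimes h_{[0]2}\otimes h_{[1]}=h_{1[0]}\otimes h_{1[1](-1)}h_{2[0]}\otimes h_{1[1](0)}h_{2[1]}$; (HM4) $h_{[0]}a_{(-1)}\otimes h_{[1]}a_{(0)}=a_{(-1)}h_{[0]}\otimes a_{(0)}h_{[1]}$. In the claim both $A$ and $H$ are $A_{\Delta'}$, so their comultiplication is $\Delta'$. *)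

(* Hopf algebras over a field K, with tensors encoded as
   formal sums and equality in the tensor product given by its universal
   property (agreement under every bi/trilinear map into every K-module). *)
From HB Require Import structures.
From mathcomp Require Import all_boot all_order all_algebra.
Set Implicit Arguments. Unset Strict Implicit. Unset Printing Implicit Defensive.
Import GRing.Theory.
Local Open Scope ring_scope.

Section Tensors.
Variable K : fieldType.

Definition tbind (X Y : Type) (s : seq X) (f : X -> seq Y) : seq Y :=
  flatten (map f s).

Definition bilin (V W U : lmodType K) (b : V -> W -> U) : Prop :=
  (forall w c x y, b (c *: x + y) w = c *: b x w + b y w) /\
  (forall v c x y, b v (c *: x + y) = c *: b v x + b v y).

Definition trilin (V W X U : lmodType K) (t : V -> W -> X -> U) : Prop :=
  (forall w z c x y, t (c *: x + y) w z = c *: t x w z + t y w z) /\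
  (forall v z c x y, t v (c *: x + y) z = c *: t v x z + t v y z) /\
  (forall v w c x y, t v w (c *: x + y) = c *: t v w x + t v w y).

Definition teq2 (V W : lmodType K) (s t : seq (V * W)) : Prop :=
  forall (U : lmodType K) (b : V -> W -> U), bilin b ->
    \sum_(p <- s) b p.1 p.2 = \sum_(p <- t) b p.1 p.2.

Definition teq3 (V W X : lmodType K) (s t : seq (V * W * X)) : Prop :=
  forall (U : lmodType K) (f : V -> W -> X -> U), trilin f ->
    \sum_(p <- s) f p.1.1 p.1.2 p.2 = \sum_(p <- t) f p.1.1 p.1.2 p.2.

Definition tlinear2 (A V W : lmodType K) (F : A -> seq (V * W)) : Prop :=
  forall c x y, teq2 (F (c *: x + y))
    (map (fun p => (c *: p.1, p.2)) (F x) ++ F y).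

Record is_hopf (A : algType K) (D : A -> seq (A * A)) (e : A -> K)
    (S : A -> A) : Prop := IsHopf {
  hopf_D_linear : tlinear2 D;
  hopf_e_linear : forall c x y, e (c *: x + y) = c * e x + e y;
  hopf_S_linear : forall c x y, S (c *: x + y) = c *: S x + S y;
  hopf_coassoc : forall h,
    teq3 (tbind (D h) (fun p => map (fun q => (q.1, q.2, p.2)) (D p.1)))
         (tbind (D h) (fun p => map (fun q => (p.1, q.1, q.2)) (D p.2)));
  hopf_counitl : forall h, \sum_(p <- D h) e p.1 *: p.2 = h;
  hopf_counitr : forall h, \sum_(p <- D h) e p.2 *: p.1 = h;
  hopf_D_mul : forall x y, teq2 (D (x * y))
    (tbind (D x) (fun p => map (fun q => (p.1 * q.1, p.2 * q.2)) (D y)));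
  hopf_D_1 : teq2 (D 1) [:: (1, 1)];
  hopf_e_mul : forall x y, e (x * y) = e x * e y;
  hopf_e_1 : e 1 = 1;
  hopf_antipodel : forall h, \sum_(p <- D h) S p.1 * p.2 = (e h)%:A;
  hopf_antipoder : forall h, \sum_(p <- D h) p.1 * S p.2 = (e h)%:A
}.

(* Hopf brace (A, D, D'): Hopf structures (D, e, S) and (D', e', T) on the
   same algebra with
   h_{1'} (x) h_{2'1} (x) h_{2'2} = h_{11'} S(h_2) h_{31'} (x) h_{12'} (x) h_{32'} *)
Record is_hopf_brace (A : algType K)
    (D : A -> seq (A * A)) (e : A -> K) (S : A -> A)
    (D' : A -> seq (A * A)) (e' : A -> K) (T : A -> A) : Prop := IsHopfBrace {
  brace_hopf : is_hopf D e S;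
  brace_hopf' : is_hopf D' e' T;
  brace_compat : forall h, teq3
    (tbind (D' h) (fun p => map (fun q => (p.1, q.1, q.2)) (D p.2)))
    (tbind (D h) (fun p => tbind (D p.1) (fun q =>
       (* q.1 = h_1, q.2 = h_2, p.2 = h_3 *)
       tbind (D' q.1) (fun r => map (fun u =>
          (r.1 * S q.2 * u.1, r.2, u.2)) (D' p.2)))))
}.

Record is_hopf_matched_pair (A H : algType K)
    (DA : A -> seq (A * A)) (eA : A -> K)
    (DH : H -> seq (H * H)) (eH : H -> K)
    (rho : A -> seq (H * A)) (phi : H -> seq (H * A)) : Prop := IsHMP {
  (* (A, rho) is a left H-comodule algebra *)
  mp_rho_linear : tlinear2 rho;
  mp_rho_coassoc : forall a, teq3
    (tbind (rho a) (fun p => map (fun q => (q.1, q.2, p.2)) (DH p.1)))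
    (tbind (rho a) (fun p => map (fun q => (p.1, q.1, q.2)) (rho p.2)));
  mp_rho_counit : forall a, \sum_(p <- rho a) eH p.1 *: p.2 = a;
  mp_rho_mul : forall a b, teq2 (rho (a * b))
    (tbind (rho a) (fun p => map (fun q => (p.1 * q.1, p.2 * q.2)) (rho b)));
  mp_rho_1 : teq2 (rho 1) [:: (1, 1)];
  (* (H, phi) is a right A-comodule algebra *)
  mp_phi_linear : tlinear2 phi;
  mp_phi_coassoc : forall h, teq3
    (tbind (phi h) (fun p => map (fun q => (q.1, q.2, p.2)) (phi p.1)))
    (tbind (phi h) (fun p => map (fun q => (p.1, q.1, q.2)) (DA p.2)));
  mp_phi_counit : forall h, \sum_(p <- phi h) eA p.2 *: p.1 = h;
  mp_phi_mul : forall h g, teq2 (phi (h * g))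
    (tbind (phi h) (fun p => map (fun q => (p.1 * q.1, p.2 * q.2)) (phi g)));
  mp_phi_1 : teq2 (phi 1) [:: (1, 1)];
  mp_HM1_rho : forall a, \sum_(p <- rho a) eA p.2 *: p.1 = (eA a)%:A;
  mp_HM1_phi : forall h, \sum_(p <- phi h) eH p.1 *: p.2 = (eH h)%:A;
  mp_HM2 : forall a, teq3
    (tbind (rho a) (fun p => map (fun q => (p.1, q.1, q.2)) (DA p.2)))
    (tbind (DA a) (fun p => tbind (rho p.1) (fun x => tbind (rho p.2) (fun z =>
       map (fun w => (x.1 * w.1, x.2 * w.2, z.2)) (phi z.1)))));
  mp_HM3 : forall h, teq3
    (tbind (phi h) (fun p => map (fun q => (q.1, q.2, p.2)) (DH p.1)))
    (tbind (DH h) (fun p => tbind (phi p.1) (fun x => tbind (phi p.2) (fun z =>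
       map (fun w => (x.1, w.1 * z.1, w.2 * z.2)) (rho x.2)))));
  mp_HM4 : forall a h, teq2
    (tbind (phi h) (fun x => map (fun u => (x.1 * u.1, x.2 * u.2)) (rho a)))
    (tbind (phi h) (fun x => map (fun u => (u.1 * x.1, u.2 * x.2)) (rho a)))
}.

Definition brace_rho (A : algType K) (D D' : A -> seq (A * A)) (S : A -> A)
    (a : A) : seq (A * A) :=
  tbind (D a) (fun p => map (fun q => (S p.1 * q.1, q.2)) (D' p.2)).

(* phi(a) = T(a_{1'})_{(-1)} a_{2'} (x) T(a_{1'})_{(0)} a_{3'},
   with a_{1'} (x) a_{2'} (x) a_{3'} = (D' (x) id) D'(a) *)
Definition brace_phi (A : algType K) (D D' : A -> seq (A * A)) (S T : A -> A)
    (a : A) : seq (A * A) :=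
  tbind (D' a) (fun p => tbind (D' p.1) (fun q =>
    map (fun r => (r.1 * q.2, r.2 * p.2)) (brace_rho D D' S (T q.1)))).

End Tensors.

(* For a commutative algebra B, the algebra maps A -> B form a skew brace:
   the group operations are the convolution products of D and of D', with
   inverses f o S and f o T, and the Hopf brace compatibility of A becomes the
   skew brace law.  Take B = A (x) A (x) A and let x_0, x_1, x_2 be the three
   canonical inclusions.  Then rho is lambda_{x_0}(x_1) = x_0^-1 (x_0 o x_1)
   and phi is mu_{x_1}(x_0) = lambda_{x_0}(x_1)^-1 o x_0 o x_1 (inverse for o),
   and each matched pair axiom becomes an identity between lambda and mu that
   holds in every skew brace; e.g. coassociativity of rho is
   lambda_{x o y} = lambda_x lambda_y.  Maps A -> A (x) A (x) A are written as
   words in x_0, x_1, x_2 and evaluated against trilinear test maps, as the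
   tensor product is only available through its universal property. *)

From HB Require Import structures.
From mathcomp Require Import all_boot all_order all_algebra.
From mathcomp Require Import ring.
From Stdlib Require Import FunctionalExtensionality Setoid Morphisms.
Set Implicit Arguments. Unset Strict Implicit. Unset Printing Implicit Defensive.
Import GRing.Theory.
Local Open Scope ring_scope.

Lemma big_tbind (X Y : Type) (V : nmodType) (s : seq X) (f : X -> seq Y)
    (F : Y -> V) :
  \sum_(p <- tbind s f) F p = \sum_(x <- s) \sum_(p <- f x) F p.
Proof. by rewrite /tbind big_flatten /= big_map. Qed.

Lemma tbind_mulC (R : comPzRingType) (s t : seq (R * R)) :
  tbind s (fun x => map (fun u => (x.1 * u.1, x.2 * u.2)) t) =
  tbind s (fun x => map (fun u => (u.1 * x.1, u.2 * x.2)) t).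
Proof.
congr tbind; apply: functional_extensionality => x.
by apply: eq_map => u; rewrite mulrC [x.2 * _]mulrC.
Qed.

Section Multilinear.
Variable K : fieldType.

Section LinearPredicate.
Variables (V U : lmodType K) (f : V -> U).
Hypothesis f_linear : linear f.

Let f_lin : {linear V -> U} := HB.pack f (GRing.isLinear.Build _ _ _ _ f f_linear).

Lemma linZ c x : f (c *: x) = c *: f x.
Proof. exact: (linearZZ f_lin). Qed.

Lemma lin_sum (I : Type) (r : seq I) (F : I -> V) :
  f (\sum_(i <- r) F i) = \sum_(i <- r) f (F i).
Proof. exact: (linear_sum f_lin). Qed.

End LinearPredicate.

Section ScalarPredicate.
Variables (V : lmodType K) (f : V -> K).
Hypothesis f_scalar : scalar f.

Let f_lin : {scalar V} := HB.pack f (GRing.isLinear.Build _ _ _ _ f f_scalar).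

Lemma scalZ c x : f (c *: x) = c * f x.
Proof. exact: (scalarZ f_lin). Qed.

Lemma scal_sum (I : Type) (r : seq I) (F : I -> V) :
  f (\sum_(i <- r) F i) = \sum_(i <- r) f (F i).
Proof. exact: (linear_sum f_lin). Qed.

End ScalarPredicate.

Lemma linear_scale_scalar (V U : lmodType K) (f : V -> K) (u : U) :
  scalar f -> linear (fun v => f v *: u).
Proof. by move=> fS c x y; rewrite fS scalerDl scalerA. Qed.

Lemma linear_sum_fun (V U : lmodType K) (I : Type) (r : seq I)
    (F : V -> I -> U) :
  (forall i, linear (F^~ i)) -> linear (fun v => \sum_(i <- r) F v i).
Proof.
move=> FL c x y; rewrite scaler_sumr -big_split.
by apply: eq_bigr => i _; apply: FL.
Qed.

Lemma bilin_linl (V W U : lmodType K) (b : V -> W -> U) w :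
  bilin b -> linear (b^~ w).
Proof. by case=> bl _ c x y; apply: bl. Qed.

Lemma bilin_linr (V W U : lmodType K) (b : V -> W -> U) v :
  bilin b -> linear (b v).
Proof. by case=> _ br c x y; apply: br. Qed.

Lemma bilinP (V W U : lmodType K) (b : V -> W -> U) :
  (forall w, linear (b^~ w)) -> (forall v, linear (b v)) -> bilin b.
Proof. by move=> bl br; split=> *; [apply: bl | apply: br]. Qed.

Lemma trilin_linear1 (V W X U : lmodType K) (t : V -> W -> X -> U) w z :
  trilin t -> linear (fun v => t v w z).
Proof. by case=> t1 _ c x y; apply: t1. Qed.

Lemma trilin_linear2 (V W X U : lmodType K) (t : V -> W -> X -> U) v z :
  trilin t -> linear (fun w => t v w z).
Proof. by case=> _ [t2 _] c x y; apply: t2. Qed.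

Lemma trilin_linear3 (V W X U : lmodType K) (t : V -> W -> X -> U) v w :
  trilin t -> linear (t v w).
Proof. by case=> _ [_ t3] c x y; apply: t3. Qed.

Lemma trilinP (V W X U : lmodType K) (t : V -> W -> X -> U) :
  (forall w z, linear (fun v => t v w z)) ->
  (forall v z, linear (fun w => t v w z)) ->
  (forall v w, linear (t v w)) -> trilin t.
Proof. by move=> t1 t2 t3; split; [|split] => *; [apply: t1|apply: t2|apply: t3]. Qed.

End Multilinear.

Section LinearClosure.
Variables (K : fieldType) (A : algType K) (V : lmodType K).

Lemma linear_id : linear (fun v : V => v).
Proof. by []. Qed.

Lemma linear_comp (W U : lmodType K) (G : W -> U) (F : V -> W) :
  linear G -> linear F -> linear (fun v => G (F v)).
Proof. by move=> GL FL c x y; rewrite FL GL. Qed.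

Lemma linear_mulr_fun (F : V -> A) b : linear F -> linear (fun v => F v * b).
Proof. by move=> FL c x y; rewrite FL mulrDl scalerAl. Qed.

Lemma linear_mull_fun (F : V -> A) b : linear F -> linear (fun v => b * F v).
Proof. by move=> FL c x y; rewrite FL mulrDr scalerAr. Qed.

Lemma linear_scale_fun (U : lmodType K) (F : V -> U) k :
  linear F -> linear (fun v => k *: F v).
Proof. by move=> FL c x y; rewrite FL scalerDr !scalerA mulrC. Qed.

End LinearClosure.
Arguments linear_id {K V}.

Ltac linear_closure_step :=
  first [ exact: linear_id | apply: linear_sum_fun => ? | apply: linear_mulr_fun
        | apply: linear_mull_fun | apply: linear_scale_fun ].
Ltac linear_closure := repeat linear_closure_step.
Ltac linear_closure_with f_linear :=
  repeat first [ exact: f_linear | apply: (linear_comp f_linear)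
               | linear_closure_step ].

(** * Hopf algebras and Hopf braces *)

Section HopfAlgebra.
Variables (K : fieldType) (A : comAlgType K).
Variables (D : A -> seq (A * A)) (e : A -> K) (S : A -> A).
Hypothesis H : is_hopf D e S.

Let S_linear : linear S := hopf_S_linear H.

Lemma coprod_linear (U : lmodType K) (b : A -> A -> U) :
  bilin b -> linear (fun x => \sum_(p <- D x) b p.1 p.2).
Proof.
move=> bB c x y; rewrite (hopf_D_linear H c x y bB) big_cat /= big_map.
rewrite scaler_sumr; congr (_ + _); apply: eq_bigr => p _.
exact: (linZ (bilin_linl _ bB)).
Qed.

Lemma coassoc_sum (U : lmodType K) (f : A -> A -> A -> U) h : trilin f ->
  \sum_(p <- D h) \sum_(q <- D p.1) f q.1 q.2 p.2 =
  \sum_(p <- D h) \sum_(q <- D p.2) f p.1 q.1 q.2.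
Proof.
move=> fT; have := hopf_coassoc H h fT; rewrite !big_tbind.
by under eq_bigr do rewrite big_map; under [RHS]eq_bigr do rewrite big_map.
Qed.

Lemma coprodM_sum (U : lmodType K) (b : A -> A -> U) x y : bilin b ->
  \sum_(p <- D (x * y)) b p.1 p.2 =
  \sum_(p <- D x) \sum_(q <- D y) b (p.1 * q.1) (p.2 * q.2).
Proof.
move=> bB; rewrite (hopf_D_mul H x y bB) big_tbind.
by under eq_bigr do rewrite big_map.
Qed.

Lemma coprod1_sum (U : lmodType K) (b : A -> A -> U) : bilin b ->
  \sum_(p <- D 1) b p.1 p.2 = b 1 1.
Proof. by move=> bB; rewrite (hopf_D_1 H bB) big_seq1. Qed.

Lemma counitl_sum (U : lmodType K) (G : A -> U) h : linear G ->
  \sum_(p <- D h) e p.1 *: G p.2 = G h.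
Proof.
move=> GL; rewrite -{2}(hopf_counitl H h) (lin_sum GL).
by apply: eq_bigr => p _; rewrite (linZ GL).
Qed.

Lemma counitr_sum (U : lmodType K) (G : A -> U) h : linear G ->
  \sum_(p <- D h) e p.2 *: G p.1 = G h.
Proof.
move=> GL; rewrite -{2}(hopf_counitr H h) (lin_sum GL).
by apply: eq_bigr => p _; rewrite (linZ GL).
Qed.

Lemma antipodel_sum (U : lmodType K) (G : A -> U) h : linear G ->
  \sum_(p <- D h) G (S p.1 * p.2) = e h *: G 1.
Proof. by move=> GL; rewrite -(lin_sum GL) (hopf_antipodel H) (linZ GL). Qed.

Lemma antipoder_sum (U : lmodType K) (G : A -> U) h : linear G ->
  \sum_(p <- D h) G (p.1 * S p.2) = e h *: G 1.
Proof. by move=> GL; rewrite -(lin_sum GL) (hopf_antipoder H) (linZ GL). Qed.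

Lemma bilin_antipode_mul : bilin (fun u v : A => S u * v).
Proof. by apply: bilinP => [w|v]; linear_closure_with S_linear. Qed.

Lemma antipode1 : S 1 = 1.
Proof.
have := hopf_antipodel H 1.
by rewrite (coprod1_sum bilin_antipode_mul) mulr1 (hopf_e_1 H) scale1r.
Qed.

Lemma coassoc2_sum (U : lmodType K) (F : A -> A -> A -> A -> A -> A -> U) x y :
  (forall b1 b2 b3, trilin (fun a1 a2 a3 => F a1 a2 a3 b1 b2 b3)) ->
  (forall a1 a2 a3, trilin (F a1 a2 a3)) ->
  \sum_(p <- D x) \sum_(q <- D y) \sum_(p' <- D p.1) \sum_(q' <- D q.1)
    F p'.1 p'.2 p.2 q'.1 q'.2 q.2 =
  \sum_(p <- D x) \sum_(q <- D y) \sum_(p' <- D p.2) \sum_(q' <- D q.2)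
    F p.1 p'.1 p'.2 q.1 q'.1 q'.2.
Proof.
move=> Fa Fb; under eq_bigr do rewrite exchange_big /=.
rewrite (coassoc_sum (f := fun a1 a2 a3 => \sum_(q <- D y)
  \sum_(q' <- D q.1) F a1 a2 a3 q'.1 q'.2 q.2)); last first.
  apply: trilinP => *; do 2 apply: linear_sum_fun => ?;
  [exact: trilin_linear1 (Fa _ _ _) | exact: trilin_linear2 (Fa _ _ _)
  | exact: trilin_linear3 (Fa _ _ _)].
under eq_bigr do rewrite exchange_big /=.
rewrite exchange_big /=.
under eq_bigr do under eq_bigr do rewrite exchange_big /=.
under eq_bigr do rewrite exchange_big /=.
rewrite (coassoc_sum (f := fun b1 b2 b3 => \sum_(p <- D x)
  \sum_(p' <- D p.2) F p.1 p'.1 p'.2 b1 b2 b3)); last first.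
  apply: trilinP => *; do 2 apply: linear_sum_fun => ?;
  [exact: trilin_linear1 (Fb _ _ _) | exact: trilin_linear2 (Fb _ _ _)
  | exact: trilin_linear3 (Fb _ _ _)].
under [LHS]eq_bigr do rewrite exchange_big /=.
under [LHS]eq_bigr do under eq_bigr do rewrite exchange_big /=.
by rewrite [LHS]exchange_big.
Qed.

Lemma antipodeM x y : S (x * y) = S x * S y.
Proof.
pose F (a1 a2 a3 b1 b2 b3 : A) := S (a1 * b1) * (a2 * b2) * (S a3 * S b3).
have eps_mul u v : \sum_(p <- D u) \sum_(q <- D v) S (p.1 * q.1) * (p.2 * q.2)
    = (e u * e v)%:A.
  by rewrite -(coprodM_sum _ _ bilin_antipode_mul) (hopf_antipodel H) (hopf_e_mul H).
(* S x S y = S(x1 y1) x2 y2 S x3 S y3 = S(x1 y1) e(x2) e(y2) = S (x y) *)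
have -> : S x * S y = \sum_(p <- D x) \sum_(q <- D y)
    \sum_(p' <- D p.1) \sum_(q' <- D q.1) F p'.1 p'.2 p.2 q'.1 q'.2 q.2.
  rewrite -[S x](counitl_sum _ S_linear) -[S y](counitl_sum _ S_linear) mulr_suml.
  apply: eq_bigr => p _; rewrite mulr_sumr; apply: eq_bigr => q _.
  rewrite -scalerAl -scalerAr scalerA -mulr_algl -eps_mul mulr_suml.
  by apply: eq_bigr => p' _; rewrite mulr_suml.
rewrite coassoc2_sum; last 2 first.
- by move=> *; apply: trilinP => *; rewrite /F; linear_closure_with S_linear.
- by move=> *; apply: trilinP => *; rewrite /F; linear_closure_with S_linear.
have antipodes p q :
    \sum_(p' <- D p.2) \sum_(q' <- D q.2) F p.1 p'.1 p'.2 q.1 q'.1 q'.2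
    = S (e p.2 *: p.1 * (e q.2 *: q.1)).
  rewrite -scalerAl -scalerAr !(linZ S_linear) scalerA mulrC -scalerA.
  rewrite -[e q.2 *: _]mulr_algr -[e p.2 *: _]mulr_algr -mulrA.
  rewrite -(hopf_antipoder H q.2) -(hopf_antipoder H p.2).
  rewrite mulr_suml mulr_sumr; apply: eq_bigr => p' _.
  rewrite !mulr_sumr; apply: eq_bigr => q' _.
  by rewrite /F; ring.
under eq_bigr do under eq_bigr do rewrite antipodes.
under eq_bigr do rewrite -(lin_sum S_linear) -mulr_sumr.
by rewrite -(lin_sum S_linear) -mulr_suml !(hopf_counitr H).
Qed.

End HopfAlgebra.

Section HopfBrace.
Variables (K : fieldType) (A : comAlgType K).
Variables (D : A -> seq (A * A)) (e : A -> K) (S : A -> A).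
Variables (D' : A -> seq (A * A)) (e' : A -> K) (T : A -> A).
Hypothesis HB : is_hopf_brace D e S D' e' T.

Let HD := brace_hopf HB.
Let HD' := brace_hopf' HB.

Lemma brace_compat_sum (U : lmodType K) (f : A -> A -> A -> U) h : trilin f ->
  \sum_(p <- D' h) \sum_(q <- D p.2) f p.1 q.1 q.2 =
  \sum_(p <- D h) \sum_(q <- D p.1) \sum_(r <- D' q.1) \sum_(u <- D' p.2)
      f (r.1 * S q.2 * u.1) r.2 u.2.
Proof.
move=> fT; have := brace_compat HB h fT; rewrite !big_tbind.
under eq_bigr do rewrite big_map.
by under [RHS]eq_bigr do (rewrite big_tbind; under eq_bigr do
   (rewrite big_tbind; under eq_bigr do rewrite big_map)).
Qed.

(* Apply id (x) e (x) e' to the brace compatibility, then contract h_1 S(h_2) h_3. *)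
Lemma brace_counitr h : \sum_(p <- D' h) e p.2 *: p.1 = h.
Proof.
pose E v := \sum_(p <- D' v) e p.2 *: p.1.
have E_linear : linear E.
  apply: (coprod_linear HD' (b := fun x y => e y *: x)).
  apply: bilinP => [w|v]; first exact: linear_scale_fun.
  exact: linear_scale_scalar (hopf_e_linear HD).
have f_trilin : trilin (fun x y z : A => e y *: (e' z *: x)).
  apply: trilinP => [w z|v z|v w]; first by do 2 apply: linear_scale_fun.
    exact: linear_scale_scalar (hopf_e_linear HD).
  move=> c x y; rewrite (hopf_e_linear HD') scalerDl scalerDr !scalerA.
  by rewrite mulrCA.
symmetry; rewrite -[in LHS](hopf_counitr HD' h).
transitivity (\sum_(p <- D' h) \sum_(q <- D p.2) e q.1 *: (e' q.2 *: p.1)).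
  apply: eq_bigr => p _; symmetry.
  exact: (counitl_sum HD _ (linear_scale_scalar _ (hopf_e_linear HD'))).
rewrite (brace_compat_sum h f_trilin).
transitivity (\sum_(p <- D h) \sum_(q <- D p.1) E q.1 * (S q.2 * p.2)).
  apply: eq_bigr => p _; apply: eq_bigr => q _.
  rewrite /E mulr_suml; apply: eq_bigr => r _.
  rewrite -scaler_sumr (counitr_sum HD' _ (linear_mull_fun _ linear_id)).
  by rewrite -scalerAl mulrA.
rewrite (coassoc_sum HD (f := fun a b c => E a * (S b * c))); last first.
  apply: trilinP => *; linear_closure_with E_linear.
  exact: (linear_comp (hopf_S_linear HD)).
under eq_bigr do rewrite (antipodel_sum HD _ (linear_mull_fun _ linear_id)) mulr1.
exact: (counitr_sum HD _ E_linear).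
Qed.

Lemma brace_counit_eq h : e' h = e h.
Proof.
rewrite -[in LHS](brace_counitr h) (scal_sum (hopf_e_linear HD')).
rewrite -[in RHS](hopf_counitl HD' h) (scal_sum (hopf_e_linear HD)).
apply: eq_bigr => p _; rewrite (scalZ (hopf_e_linear HD)).
by rewrite (scalZ (hopf_e_linear HD')) mulrC.
Qed.

End HopfBrace.

(** * Words in the two convolution products *)

Inductive word : Type :=
  | X0 | X1 | X2 | Eps
  | Conv of bool & word & word
  | Anti of bool & word.

Notation Mul := (Conv false).
Notation Circ := (Conv true).
Notation Inv := (Anti false).
Notation Bar := (Anti true).

Fixpoint wsubst (w s0 s1 s2 : word) : word :=
  match w with
  | X0 => s0 | X1 => s1 | X2 => s2 | Eps => Eps
  | Conv b u v => Conv b (wsubst u s0 s1 s2) (wsubst v s0 s1 s2)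
  | Anti b u => Anti b (wsubst u s0 s1 s2)
  end.

Section Words.
Variables (K : fieldType) (A : comAlgType K).
Variables (D : A -> seq (A * A)) (e : A -> K) (S : A -> A).
Variables (D' : A -> seq (A * A)) (e' : A -> K) (T : A -> A).
Hypothesis HB : is_hopf_brace D e S D' e' T.

Local Notation tri := (A * A * A)%type.

Definition coprod_of (b : bool) := if b then D' else D.
Definition antipode_of (b : bool) := if b then T else S.

Lemma hopf_of b : is_hopf (coprod_of b) e (antipode_of b).
Proof.
case: b; last exact: brace_hopf HB.
have -> : e = e' by apply: functional_extensionality => h; rewrite (brace_counit_eq HB).
exact: brace_hopf' HB.
Qed.

(* [eval w a g] is [g] applied to [w(a)], where the word [w] denotes an
   algebra map A -> A (x) A (x) A and [g] stands for a trilinear map, given on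
   elementary tensors [(x, y, z)]; elementary tensors multiply in [A * A * A]. *)
Fixpoint eval (U : lmodType K) (w : word) (a : A) (g : tri -> U) : U :=
  match w with
  | X0 => g (a, 1, 1)
  | X1 => g (1, a, 1)
  | X2 => g (1, 1, a)
  | Eps => e a *: g 1
  | Conv b u v =>
      \sum_(p <- coprod_of b a) eval u p.1 (fun x => eval v p.2 (fun y => g (x * y)))
  | Anti b u => eval u (antipode_of b a) g
  end.

Definition mulcont (U : lmodType K) (w : word) (b : A) (g : tri -> U) : tri -> U :=
  fun x => eval w b (fun y => g (x * y)).

Definition trilin3 (U : lmodType K) (g : tri -> U) :=
  trilin (fun x y z => g (x, y, z)).

Lemma eval_conv (U : lmodType K) c u v a (g : tri -> U) :
  eval (Conv c u v) a g = \sum_(p <- coprod_of c a) eval u p.1 (mulcont v p.2 g).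
Proof. by []. Qed.

Lemma mulcont_anti (U : lmodType K) c u b (g : tri -> U) :
  mulcont (Anti c u) b g = mulcont u (antipode_of c b) g.
Proof. by []. Qed.

Lemma mul_tri (a b c x y z : A) : (a, b, c) * (x, y, z) = (a * x, b * y, c * z).
Proof. by []. Qed.

Section Evaluation.
Variable U : lmodType K.
Implicit Types (g G H : tri -> U) (w : word).

Lemma eq_eval w a g g' : g =1 g' -> eval w a g = eval w a g'.
Proof.
elim: w a g g' => [||||b u IHu v IHv|b u IHu] a g g' gg' /=; rewrite ?gg' //.
- by apply: eq_bigr => p _; apply: IHu => x; apply: IHv => y.
- exact: IHu.
Qed.

Lemma eval_linear_cont w a c G H :
  eval w a (fun x => c *: G x + H x) = c *: eval w a G + eval w a H.
Proof.
elim: w a G H => [||||b u IHu v IHv|b u IHu] a G H //=.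
- by rewrite scalerDr !scalerA mulrC.
- rewrite scaler_sumr -big_split; apply: eq_bigr => p _ /=.
  by rewrite -IHu; apply: eq_eval => x; apply: IHv.
Qed.

Lemma eval_cont0 w a : eval w a (fun=> 0 : U) = 0.
Proof.
elim: w a => [||||b u IHu v IHv|b u IHu] a //=; first by rewrite scaler0.
rewrite big1 // => p _.
by rewrite (eq_eval _ _ (g' := fun=> 0)) // => x; apply: IHv.
Qed.

Lemma eval_contZ w a c G : eval w a (fun x => c *: G x) = c *: eval w a G.
Proof.
rewrite -[RHS]addr0 -(eval_cont0 w a) -eval_linear_cont.
by apply: eq_eval => x; rewrite addr0.
Qed.

Lemma eval_cont_sum (I : Type) (r : seq I) w a (F : I -> tri -> U) :
  eval w a (fun x => \sum_(i <- r) F i x) = \sum_(i <- r) eval w a (F i).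
Proof.
elim: r => [|i r IHr].
  by rewrite [RHS]big_nil -[RHS](eval_cont0 w a); apply: eq_eval => x; rewrite big_nil.
rewrite big_cons -IHr -[eval w a (F i)]scale1r -eval_linear_cont.
by apply: eq_eval => x; rewrite big_cons scale1r.
Qed.

Lemma eval_swap w w' a b (G : tri -> tri -> U) :
  eval w a (fun x => eval w' b (G x)) = eval w' b (fun y => eval w a (G^~ y)).
Proof.
elim: w a G => [||||c u IHu v IHv|c u IHu] a G //=.
- by rewrite -eval_contZ.
- rewrite eval_cont_sum; apply: eq_bigr => p _.
  rewrite -(IHu _ (fun x y => eval v p.2 (fun z => G (x * z) y))).
  by apply: eq_eval => x; apply: IHv.
Qed.

Lemma trilin3_mul g u : trilin3 g -> trilin3 (fun v => g (u * v)).
Proof.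
case: u => [[u1 u2] u3] [g1 [g2 g3]].
apply: trilinP => [y z|x z|x y] c v v'; rewrite !mul_tri mulrDr -scalerAr;
  [exact: g1 | exact: g2 | exact: g3].
Qed.

Lemma trilin3_mulcont w b g : trilin3 g -> trilin3 (mulcont w b g).
Proof.
case=> g1 [g2 g3]; apply: trilinP => [y z|x z|x y] c v v';
  rewrite /mulcont -eval_linear_cont; apply: eq_eval => -[[u1 u2] u3];
  rewrite !mul_tri mulrDl -scalerAl; [exact: g1 | exact: g2 | exact: g3].
Qed.

Lemma eval_linear w g : trilin3 g -> linear (fun a => eval w a g).
Proof.
elim: w g => [||||b u IHu v IHv|b u IHu] g gT /=; case: (gT) => g1 [g2 g3].
- by move=> *; apply: g1.
- by move=> *; apply: g2.
- by move=> *; apply: g3.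
- exact: linear_scale_scalar (hopf_e_linear (hopf_of false)).
- have uvB : bilin (fun x y => eval u x (mulcont v y g)).
    apply: bilinP => [y|x]; first exact: IHu _ (trilin3_mulcont v y gT).
    move=> c y y'; rewrite -eval_linear_cont; apply: eq_eval => x'.
    exact: (IHv _ (trilin3_mul x' gT)).
  exact: (coprod_linear (hopf_of b) uvB).
- exact: linear_comp (IHu g gT) (hopf_S_linear (hopf_of b)).
Qed.

Lemma bilin_eval_mulcont u v g : trilin3 g ->
  bilin (fun x y => eval u x (mulcont v y g)).
Proof.
move=> gT; apply: bilinP => [y|x]; first exact: eval_linear (trilin3_mulcont v y gT).
move=> c y y'; rewrite -eval_linear_cont; apply: eq_eval => x'.
exact: (eval_linear v (trilin3_mul x' gT)).
Qed.

Lemma eval1 w g : trilin3 g -> eval w 1 g = g 1.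
Proof.
elim: w g => [||||b u IHu v IHv|b u IHu] g gT //=.
- by rewrite (hopf_e_1 (hopf_of false)) scale1r.
- rewrite (coprod1_sum (hopf_of b) (bilin_eval_mulcont u v gT)).
  rewrite IHu; last exact: trilin3_mulcont.
  by rewrite /mulcont IHv ?mulr1 //; apply: trilin3_mul.
- by rewrite (antipode1 (hopf_of b)) IHu.
Qed.

Lemma evalM w g a b : trilin3 g -> eval w (a * b) g = eval w a (mulcont w b g).
Proof.
elim: w g a b => [||||c u IHu v IHv|c u IHu] g a b gT.
- by rewrite /mulcont /= mul_tri !mulr1.
- by rewrite /mulcont /= mul_tri !mulr1.
- by rewrite /mulcont /= mul_tri !mulr1.
- by rewrite /mulcont /= mulr1 (hopf_e_mul (hopf_of false)) scalerA.
- rewrite !eval_conv (coprodM_sum (hopf_of c) _ _ (bilin_eval_mulcont u v gT)).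
  apply: eq_bigr => p _; rewrite [in RHS]/mulcont.
  under eq_eval => x do under eq_eval => y do rewrite eval_conv.
  under eq_eval => x do rewrite eval_cont_sum.
  rewrite eval_cont_sum; apply: eq_bigr => q _.
  rewrite IHu; last exact: trilin3_mulcont.
  apply: eq_eval => x; rewrite /mulcont [RHS]eval_swap; apply: eq_eval => x'.
  rewrite IHv; last exact: trilin3_mul.
  by apply: eq_eval => y; apply: eq_eval => y'; rewrite mulrACA mulrA.
- by rewrite /= (antipodeM (hopf_of c)) IHu.
Qed.

Lemma mulcont1 w g : trilin3 g -> mulcont w 1 g = g.
Proof.
move=> gT; apply: functional_extensionality => x.
by rewrite /mulcont eval1 ?mulr1 //; apply: trilin3_mul.
Qed.

Lemma mulcontM w g a b :
  trilin3 g -> mulcont w (a * b) g = mulcont w a (mulcont w b g).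
Proof.
move=> gT; apply: functional_extensionality => x.
rewrite /mulcont evalM; last exact: trilin3_mul.
by apply: eq_eval => y; apply: eq_eval => z; rewrite mulrA.
Qed.

Lemma mulcont_at1 w b g : mulcont w b g 1 = eval w b g.
Proof. by apply: eq_eval => y; rewrite mul1r. Qed.

Lemma mulcontC w w' a b g :
  mulcont w a (mulcont w' b g) = mulcont w' b (mulcont w a g).
Proof.
apply: functional_extensionality => x; rewrite /mulcont eval_swap.
by apply: eq_eval => y; apply: eq_eval => z; rewrite mulrAC.
Qed.

Lemma trilin_eval_mulcont2 u v w g : trilin3 g ->
  trilin (fun x y z => eval u x (mulcont v y (mulcont w z g))).
Proof.
move=> gT; apply: trilinP => [y z|x z|x y].
- by apply: eval_linear; do 2 apply: trilin3_mulcont.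
- by apply: (bilin_linr _ (bilin_eval_mulcont _ _ _)); apply: trilin3_mulcont.
- move=> c z z'; rewrite !(mulcontC v w).
  exact: (bilin_linr _ (bilin_eval_mulcont _ _ (trilin3_mulcont v y gT))).
Qed.

Lemma mulcont_conv c u v b g :
  mulcont (Conv c u v) b g =
  fun x => \sum_(q <- coprod_of c b) mulcont u q.1 (mulcont v q.2 g) x.
Proof.
apply: functional_extensionality => x; apply: eq_bigr => q _.
by apply: eq_eval => y; apply: eq_eval => z; rewrite mulrA.
Qed.

Lemma mulcont_sum (I : Type) (r : seq I) w b (F : I -> tri -> U) :
  mulcont w b (fun x => \sum_(i <- r) F i x) =
  fun x => \sum_(i <- r) mulcont w b (F i) x.
Proof. by apply: functional_extensionality => x; rewrite /mulcont eval_cont_sum. Qed.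

Section Substitution.
Variables s0 s1 s2 : word.

Definition mulconts (t : tri) g : tri -> U :=
  mulcont s0 t.1.1 (mulcont s1 t.1.2 (mulcont s2 t.2 g)).

Lemma trilin3_mulconts t g : trilin3 g -> trilin3 (mulconts t g).
Proof. by move=> gT; do 3 apply: trilin3_mulcont. Qed.

Lemma mulconts_mul t t' g :
  trilin3 g -> mulconts (t * t') g = mulconts t (mulconts t' g).
Proof.
case: t t' => [[t0 t1] t2] [[t0' t1'] t2'] gT; rewrite /mulconts mul_tri /=.
rewrite (mulcontM s2) // (mulcontM s1); last by repeat apply: trilin3_mulcont.
rewrite (mulcontM s0); last by repeat apply: trilin3_mulcont.
by rewrite (mulcontC s0 s1 t0') (mulcontC s1 s2 t1') (mulcontC s0 s2 t0').
Qed.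

Lemma mulconts_mulcont t w b g :
  mulconts t (mulcont w b g) = mulcont w b (mulconts t g).
Proof. by rewrite /mulconts (mulcontC s2 w) (mulcontC s1 w) (mulcontC s0 w). Qed.

Lemma eval_wsubst w a g : trilin3 g ->
  eval (wsubst w s0 s1 s2) a g = eval w a (fun t => mulconts t g 1).
Proof.
elim: w a g => [||||c u IHu v IHv|c u IHu] a g gT /=.
- by rewrite /mulconts (mulcont1 s2) // (mulcont1 s1) // mulcont_at1.
- rewrite /mulconts (mulcont1 s2) // (mulcont1 s0) ?mulcont_at1 //.
  exact: trilin3_mulcont.
- rewrite /mulconts (mulcont1 s1) ?(mulcont1 s0) ?mulcont_at1 //;
  by repeat apply: trilin3_mulcont.
- by rewrite /mulconts (mulcont1 s2) // (mulcont1 s1) // (mulcont1 s0) // mul1r.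
- apply: eq_bigr => p _; rewrite IHu; last exact: trilin3_mulcont.
  apply: eq_eval => t; rewrite mulconts_mulcont mulcont_at1.
  rewrite IHv; last exact: trilin3_mulconts.
  by apply: eq_eval => y; rewrite mulrC mulconts_mul.
- exact: IHu.
Qed.

End Substitution.

End Evaluation.

Definition weq (u v : word) := forall (U : lmodType K) a (g : tri -> U),
  trilin3 g -> eval u a g = eval v a g.

#[local] Instance weq_equiv : Equivalence weq.
Proof.
split=> [u|u v uv|u v w uv vw] U a g gT //; first by rewrite uv.
by rewrite uv // vw.
Qed.

#[local] Instance conv_proper c : Proper (weq ==> weq ==> weq) (Conv c).
Proof.
move=> u u' uu' v v' vv' U a g gT; rewrite !eval_conv; apply: eq_bigr => p _.
rewrite uu'; last exact: trilin3_mulcont.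
by apply: eq_eval => x; apply: vv'; apply: trilin3_mul.
Qed.

#[local] Instance anti_proper c : Proper (weq ==> weq) (Anti c).
Proof. by move=> u u' uu' U a g gT /=; apply: uu'. Qed.

(** * Skew brace identities *)

Lemma convA c u v w : weq (Conv c (Conv c u v) w) (Conv c u (Conv c v w)).
Proof.
move=> U a g gT; rewrite !eval_conv.
under [RHS]eq_bigr => p _ do rewrite mulcont_conv eval_cont_sum.
exact: (coassoc_sum (hopf_of c) a (trilin_eval_mulcont2 u v w gT)).
Qed.

Lemma conv1w c u : weq (Conv c Eps u) u.
Proof.
move=> U a g gT; rewrite eval_conv -[RHS](counitl_sum (hopf_of c) a (eval_linear u gT)).
by apply: eq_bigr => p _; rewrite /= mulcont_at1.
Qed.

Lemma convw1 c u : weq (Conv c u Eps) u.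
Proof.
move=> U a g gT; rewrite eval_conv -[RHS](counitr_sum (hopf_of c) a (eval_linear u gT)).
apply: eq_bigr => p _; rewrite -eval_contZ.
by apply: eq_eval => x; rewrite /mulcont /= mulr1.
Qed.

Lemma conv_antiw c u : weq (Conv c (Anti c u) u) Eps.
Proof.
move=> U a g gT; rewrite eval_conv /=.
under eq_bigr do rewrite -evalM //.
by rewrite (antipodel_sum (hopf_of c) a (eval_linear u gT)) eval1.
Qed.

Lemma convw_anti c u : weq (Conv c u (Anti c u)) Eps.
Proof.
move=> U a g gT; rewrite eval_conv.
under eq_bigr do rewrite mulcont_anti -evalM //.
by rewrite (antipoder_sum (hopf_of c) a (eval_linear u gT)) eval1.
Qed.

Lemma brace_law u v w :
  weq (Circ u (Mul v w)) (Mul (Mul (Circ u v) (Inv u)) (Circ u w)).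
Proof.
move=> U a g gT; rewrite eval_conv.
under eq_bigr do rewrite mulcont_conv eval_cont_sum.
rewrite (brace_compat_sum HB a (trilin_eval_mulcont2 u v w gT)).
rewrite eval_conv; apply: eq_bigr => p _; rewrite eval_conv; apply: eq_bigr => q _.
rewrite eval_conv; apply: eq_bigr => r _.
rewrite [mulcont (Circ u w) _ _]mulcont_conv !mulcont_sum eval_cont_sum.
apply: eq_bigr => s _; rewrite !evalM; try by repeat apply: trilin3_mulcont.
by rewrite (mulcontC v u) (mulcontC v u).
Qed.

Lemma anti_unit c : weq (Anti c Eps) Eps.
Proof. by rewrite -{1}(convw1 c (Anti c Eps)) conv_antiw. Qed.

Lemma convKl c u v : weq (Conv c (Anti c u) (Conv c u v)) v.
Proof. by rewrite -convA conv_antiw conv1w. Qed.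

Lemma convKr c u v : weq (Conv c u (Conv c (Anti c u) v)) v.
Proof. by rewrite -convA convw_anti conv1w. Qed.

Lemma conv_eq_unit c u v : weq (Conv c u v) Eps -> weq u (Anti c v).
Proof. by move=> uv; rewrite -(convw1 c u) -(convw_anti c v) -convA uv conv1w. Qed.

Lemma conv_cancell c u v w : weq (Conv c u v) (Conv c u w) -> weq v w.
Proof. by move=> uvw; rewrite -(convKl c u v) uvw convKl. Qed.

Definition lam x y := Mul (Inv x) (Circ x y).
Definition mu y x := Circ (Circ (Bar (lam x y)) x) y.

#[local] Instance lam_proper : Proper (weq ==> weq ==> weq) lam.
Proof. by move=> x x' xx' y y' yy'; rewrite /lam xx' yy'. Qed.

Lemma circ_lam x y : weq (Circ x y) (Mul x (lam x y)).
Proof. by rewrite /lam convKr. Qed.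

Lemma lamM x y z : weq (lam x (Mul y z)) (Mul (lam x y) (lam x z)).
Proof. by rewrite /lam brace_law !convA. Qed.

Lemma lamx1 x : weq (lam x Eps) Eps.
Proof. by rewrite /lam convw1 conv_antiw. Qed.

Lemma lam1x y : weq (lam Eps y) y.
Proof. by rewrite /lam anti_unit conv1w conv1w. Qed.

Lemma inv_circ x y :
  weq (Inv (Circ x y)) (Mul (Mul (Inv x) (Circ x (Inv y))) (Inv x)).
Proof.
symmetry; apply: conv_eq_unit.
have E : weq (Mul (Circ x (Inv y)) (Mul (Inv x) (Circ x y))) x.
  by rewrite -convA -brace_law conv_antiw convw1.
by rewrite !convA E conv_antiw.
Qed.

Lemma lam_circ x y z : weq (lam (Circ x y) z) (lam x (lam y z)).
Proof. by rewrite /lam inv_circ brace_law -convA !convA. Qed.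

Lemma circ_lam_mu x y : weq (Circ (lam x y) (mu y x)) (Circ x y).
Proof. by rewrite /mu convA convKr. Qed.

Lemma mu1x x : weq (mu Eps x) x.
Proof. by rewrite /mu lamx1 anti_unit conv1w convw1. Qed.

Lemma mux1 y : weq (mu y Eps) Eps.
Proof. by rewrite /mu lam1x convw1 conv_antiw. Qed.

Lemma lam_circr x y z : weq (lam x (Circ y z)) (Circ (lam x y) (lam (mu y x) z)).
Proof.
by rewrite (circ_lam (lam x y)) -lam_circ circ_lam_mu circ_lam lamM -lam_circ.
Qed.

Lemma mu_circ x y z : weq (mu z (mu y x)) (mu (Circ y z) x).
Proof.
apply: (@conv_cancell true (lam x (Circ y z))).
by rewrite circ_lam_mu lam_circr convA circ_lam_mu -convA circ_lam_mu convA.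
Qed.

Lemma mu_circl x y z : weq (mu z (Circ x y)) (Circ (mu (lam y z) x) (mu z y)).
Proof.
apply: (@conv_cancell true (lam (Circ x y) z)).
by rewrite circ_lam_mu lam_circ -convA circ_lam_mu !convA circ_lam_mu.
Qed.

(** * The coactions rho and phi *)

Section Coactions.

Local Notation rho := (brace_rho D D' S).
Local Notation phi := (brace_phi D D' S T).

Definition represents (w : word) (F : A -> seq (A * A)) :=
  forall (U : lmodType K) a (g : tri -> U),
    eval w a g = \sum_(p <- F a) g (p.1, p.2, 1).

Lemma represents_coprod : represents (Circ X0 X1) D'.
Proof. by move=> U a g; apply: eq_bigr => p _; rewrite /= mul_tri !mulr1 mul1r. Qed.

Lemma represents_rho : represents (lam X0 X1) rho.
Proof.
move=> U a g; rewrite /brace_rho big_tbind; apply: eq_bigr => p _.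
rewrite big_map; apply: eq_bigr => q _.
by rewrite /= !mul_tri !mulr1 !mul1r.
Qed.

Lemma represents_phi : represents (mu X1 X0) phi.
Proof.
move=> U a g; rewrite /brace_phi big_tbind; apply: eq_bigr => p _.
rewrite big_tbind; apply: eq_bigr => q _; rewrite big_map.
rewrite /brace_rho big_tbind; apply: eq_bigr => r _; rewrite big_map.
by apply: eq_bigr => t _; rewrite /= !mul_tri !mulr1 !mul1r.
Qed.

Definition uncurry3 (U : lmodType K) (f : A -> A -> A -> U) : tri -> U :=
  fun t => f t.1.1 t.1.2 t.2.

Definition mul3 : tri -> A := uncurry3 (fun x y z => x * y * z).

Lemma trilin3_mul3 : trilin3 mul3.
Proof. by apply: trilinP => *; rewrite /mul3 /uncurry3 /=; linear_closure. Qed.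

Section Represented.
Variables (w : word) (F : A -> seq (A * A)).
Hypothesis wF : represents w F.

Lemma eval_wsubst_represented (U : lmodType K) s0 s1 a (g : tri -> U) :
  trilin3 g ->
  eval (wsubst w s0 s1 Eps) a g = \sum_(p <- F a) eval s0 p.1 (mulcont s1 p.2 g).
Proof.
move=> gT; rewrite eval_wsubst // wF; apply: eq_bigr => p _.
by rewrite /mulconts (mulcont1 Eps) // mulcont_at1.
Qed.

Lemma eval_wsubst_represented12 (U : lmodType K) a (g : tri -> U) :
  trilin3 g -> eval (wsubst w X1 X2 Eps) a g = \sum_(p <- F a) g (1, p.1, p.2).
Proof.
move=> gT; rewrite eval_wsubst_represented //; apply: eq_bigr => p _.
by rewrite /= /mulcont /= mul_tri !mulr1 !mul1r.
Qed.

Definition bilin_cont (U : lmodType K) (b : A -> A -> U) : tri -> U :=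
  fun t => b t.1.1 (t.1.2 * t.2).

Lemma trilin3_bilin_cont (U : lmodType K) (b : A -> A -> U) :
  bilin b -> trilin3 (bilin_cont b).
Proof.
move=> bB; apply: trilinP => [y z|x z|x y] c u v; rewrite /bilin_cont /=.
- exact: (bilin_linl _ bB).
- by rewrite mulrDl -scalerAl (bilin_linr _ bB).
- by rewrite mulrDr -scalerAr (bilin_linr _ bB).
Qed.

Lemma sum_represented (U : lmodType K) (b : A -> A -> U) a :
  \sum_(p <- F a) b p.1 p.2 = eval w a (bilin_cont b).
Proof. by rewrite wF; apply: eq_bigr => p _; rewrite /bilin_cont /= mulr1. Qed.

Lemma represented_linear : tlinear2 F.
Proof.
move=> c x y U b bB; rewrite sum_represented (eval_linear _ (trilin3_bilin_cont bB)).
rewrite !wF big_cat big_map /= scaler_sumr.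
congr (_ + _); apply: eq_bigr => p _; rewrite /bilin_cont /= mulr1 //.
by rewrite (linZ (bilin_linl _ bB)).
Qed.

Lemma represented_mul x y : teq2 (F (x * y))
  (tbind (F x) (fun p => map (fun q => (p.1 * q.1, p.2 * q.2)) (F y))).
Proof.
move=> U b bB; rewrite sum_represented evalM; last exact: trilin3_bilin_cont.
rewrite wF big_tbind; apply: eq_bigr => p _; rewrite big_map /mulcont wF.
by apply: eq_bigr => q _; rewrite /bilin_cont /= !mulr1.
Qed.

Lemma represented_one : teq2 (F 1) [:: (1, 1)].
Proof.
move=> U b bB; rewrite sum_represented eval1; last exact: trilin3_bilin_cont.
by rewrite big_seq1 /bilin_cont /= mulr1.
Qed.

Lemma represented_counitl a :
  \sum_(p <- F a) e' p.1 *: p.2 = eval (wsubst w Eps X0 Eps) a mul3.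
Proof.
rewrite eval_wsubst_represented; last exact: trilin3_mul3.
apply: eq_bigr => p _; rewrite (brace_counit_eq HB).
by rewrite /= /mulcont /= /mul3 /uncurry3 /= !mul1r !mulr1.
Qed.

Lemma represented_counitr a :
  \sum_(p <- F a) e' p.2 *: p.1 = eval (wsubst w X0 Eps Eps) a mul3.
Proof.
rewrite eval_wsubst_represented; last exact: trilin3_mul3.
apply: eq_bigr => p _; rewrite (brace_counit_eq HB).
by rewrite /= /mulcont /= /mul3 /uncurry3 /= !mul1r !mulr1.
Qed.

End Represented.

Section Composition.
Variables (w w' : word) (F F' : A -> seq (A * A)).
Hypotheses (wF : represents w F) (w'F' : represents w' F').

Lemma represented_compl (U : lmodType K) (f : A -> A -> A -> U) a : trilin f ->
  \sum_(p <- tbind (F a) (fun p => map (fun q => (q.1, q.2, p.2)) (F' p.1)))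
    f p.1.1 p.1.2 p.2 = eval (wsubst w w' X2 Eps) a (uncurry3 f).
Proof.
move=> fT; rewrite (eval_wsubst_represented wF) // big_tbind; apply: eq_bigr => p _.
rewrite big_map w'F'; apply: eq_bigr => q _.
by rewrite /mulcont /= /uncurry3 /= !mulr1 mul1r.
Qed.

Lemma represented_compr (U : lmodType K) (f : A -> A -> A -> U) a : trilin f ->
  \sum_(p <- tbind (F a) (fun p => map (fun q => (p.1, q.1, q.2)) (F' p.2)))
    f p.1.1 p.1.2 p.2 = eval (wsubst w X0 (wsubst w' X1 X2 Eps) Eps) a (uncurry3 f).
Proof.
move=> fT; rewrite (eval_wsubst_represented wF) // big_tbind; apply: eq_bigr => p _.
rewrite big_map /= /mulcont (eval_wsubst_represented12 w'F'); last exact: trilin3_mul.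
by apply: eq_bigr => q _; rewrite /uncurry3 /= mulr1 !mul1r.
Qed.

End Composition.

Lemma HM2_rhsE (U : lmodType K) (f : A -> A -> A -> U) a : trilin f ->
  \sum_(t <- tbind (D' a) (fun p => tbind (rho p.1) (fun x => tbind (rho p.2)
      (fun z => map (fun w => (x.1 * w.1, x.2 * w.2, z.2)) (phi z.1)))))
    f t.1.1 t.1.2 t.2 =
  eval (Circ (lam X0 X1) (lam (mu X1 X0) X2)) a (uncurry3 f).
Proof.
move=> fT; rewrite eval_conv big_tbind; apply: eq_bigr => p _.
rewrite represents_rho big_tbind; apply: eq_bigr => x _.
rewrite /mulcont -[lam (mu X1 X0) X2]/(wsubst (lam X0 X1) (mu X1 X0) X2 Eps).
rewrite (eval_wsubst_represented represents_rho); last exact: trilin3_mul.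
rewrite big_tbind; apply: eq_bigr => z _.
rewrite represents_phi big_map; apply: eq_bigr => w _.
by rewrite /mulcont /uncurry3 /= !mulr1 !mul1r.
Qed.

Lemma HM3_rhsE (U : lmodType K) (f : A -> A -> A -> U) a : trilin f ->
  \sum_(t <- tbind (D' a) (fun p => tbind (phi p.1) (fun x => tbind (phi p.2)
      (fun z => map (fun w => (x.1, w.1 * z.1, w.2 * z.2)) (rho x.2)))))
    f t.1.1 t.1.2 t.2 =
  eval (Circ (mu (lam X1 X2) X0) (mu X2 X1)) a (uncurry3 f).
Proof.
move=> fT; rewrite eval_conv big_tbind; apply: eq_bigr => p _.
rewrite -[mu (lam X1 X2) X0]/(wsubst (mu X1 X0) X0 (lam X1 X2) Eps).
rewrite (eval_wsubst_represented represents_phi); last exact: trilin3_mulcont.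
rewrite big_tbind; apply: eq_bigr => x _.
rewrite /= /mulcont -[lam X1 X2]/(wsubst (lam X0 X1) X1 X2 Eps).
rewrite (eval_wsubst_represented12 represents_rho); last first.
  exact: (trilin3_mul (x.1, 1, 1) (trilin3_mulcont (mu X2 X1) p.2 fT)).
rewrite big_tbind; under eq_bigr do rewrite big_map.
rewrite -[mu X2 X1]/(wsubst (mu X1 X0) X1 X2 Eps).
under [RHS]eq_bigr do
  rewrite (eval_wsubst_represented12 represents_phi _ (trilin3_mul _ fT)).
rewrite exchange_big /=; apply: eq_bigr => w _.
by apply: eq_bigr => z _; rewrite /uncurry3 /= !mulr1 !mul1r.
Qed.

Lemma rho_counit a : \sum_(p <- rho a) e' p.1 *: p.2 = a.
Proof.
rewrite (represented_counitl represents_rho) (@lam1x X0 _ a _ trilin3_mul3).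
by rewrite /= /mul3 /uncurry3 /= !mulr1.
Qed.

Lemma rho_HM1 a : \sum_(p <- rho a) e' p.2 *: p.1 = (e' a)%:A.
Proof.
rewrite (represented_counitr represents_rho) (@lamx1 X0 _ a _ trilin3_mul3).
by rewrite /= (brace_counit_eq HB) /mul3 /uncurry3 /= !mulr1.
Qed.

Lemma phi_counit h : \sum_(p <- phi h) e' p.2 *: p.1 = h.
Proof.
rewrite (represented_counitr represents_phi) (@mu1x X0 _ h _ trilin3_mul3).
by rewrite /= /mul3 /uncurry3 /= !mulr1.
Qed.

Lemma phi_HM1 h : \sum_(p <- phi h) e' p.1 *: p.2 = (e' h)%:A.
Proof.
rewrite (represented_counitl represents_phi) (@mux1 X0 _ h _ trilin3_mul3).
by rewrite /= (brace_counit_eq HB) /mul3 /uncurry3 /= !mulr1.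
Qed.

Lemma rho_coassoc a : teq3
    (tbind (rho a) (fun p => map (fun q => (q.1, q.2, p.2)) (D' p.1)))
    (tbind (rho a) (fun p => map (fun q => (p.1, q.1, q.2)) (rho p.2))).
Proof.
move=> U f fT; rewrite (represented_compl represents_rho represents_coprod a fT).
rewrite (represented_compr represents_rho represents_rho a fT).
exact: lam_circ.
Qed.

Lemma phi_coassoc h : teq3
    (tbind (phi h) (fun p => map (fun q => (q.1, q.2, p.2)) (phi p.1)))
    (tbind (phi h) (fun p => map (fun q => (p.1, q.1, q.2)) (D' p.2))).
Proof.
move=> U f fT; rewrite (represented_compl represents_phi represents_phi h fT).
rewrite (represented_compr represents_phi represents_coprod h fT).
exact: mu_circ.
Qed.

Lemma brace_HM2 a : teq3
    (tbind (rho a) (fun p => map (fun q => (p.1, q.1, q.2)) (D' p.2)))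
    (tbind (D' a) (fun p => tbind (rho p.1) (fun x => tbind (rho p.2) (fun z =>
       map (fun w => (x.1 * w.1, x.2 * w.2, z.2)) (phi z.1))))).
Proof.
move=> U f fT; rewrite (represented_compr represents_rho represents_coprod a fT).
rewrite HM2_rhsE //; exact: lam_circr.
Qed.

Lemma brace_HM3 h : teq3
    (tbind (phi h) (fun p => map (fun q => (q.1, q.2, p.2)) (D' p.1)))
    (tbind (D' h) (fun p => tbind (phi p.1) (fun x => tbind (phi p.2) (fun z =>
       map (fun w => (x.1, w.1 * z.1, w.2 * z.2)) (rho x.2))))).
Proof.
move=> U f fT; rewrite (represented_compl represents_phi represents_coprod h fT).
rewrite HM3_rhsE //; exact: mu_circl.
Qed.

End Coactions.

End Words.

Theorem proposition3p3 (K : fieldType) (A : comAlgType K)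
    (D : A -> seq (A * A)) (e : A -> K) (S : A -> A)
    (D' : A -> seq (A * A)) (e' : A -> K) (T : A -> A) :
  is_hopf_brace D e S D' e' T ->
  is_hopf_matched_pair D' e' D' e' (brace_rho D D' S) (brace_phi D D' S T).
Proof.
move=> HB; have rhoR := represents_rho D e S D' T.
have phiR := represents_phi D e S D' T.
constructor.
- exact: (represented_linear HB rhoR).
- exact: rho_coassoc HB.
- exact: rho_counit HB.
- exact: (represented_mul HB rhoR).
- exact: (represented_one HB rhoR).
- exact: (represented_linear HB phiR).
- exact: phi_coassoc HB.
- exact: phi_counit HB.
- exact: (represented_mul HB phiR).
- exact: (represented_one HB phiR).
- exact: rho_HM1 HB.
- exact: phi_HM1 HB.
- exact: brace_HM2 HB.
- exact: brace_HM3 HB.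
- by move=> a h; rewrite tbind_mulC.
Qed.
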